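(* Let $\mathbb N=(N,m^N,u^N)$ be a monad and $\mathbb C=(C,\Delta^C,\varepsilon^C)$ a comonad on a category $\mathcal A$, and let $L:\mathcal B\to\mathcal A_{\mathbb N}$ be a functor with right adjoint $R:\mathcal A_{\mathbb N}\to\mathcal B$ (unit $\eta$, counit $\epsilon$). There is a bijective correspondence between: (a) pairs consisting of a lifting $\widetilde{\mathbb C}$ of $\mathbb C$ to a comonad on $\mathcal A_{\mathbb N}$ and a left $\widetilde{\mathbb C}$-coaction $l:L\to\widetilde CL$ making $(L,l)$ a $\widetilde{\mathbb C}$-Galois functor; and (b) natural isomorphisms $\xi:CU_{\mathbb N}\to U_{\mathbb N}LR$ such that $(U_{\mathbb N},\xi)$ is a comonad arrow from $\mathbb C$ to the comonad $LR$ (with comultiplication $L\eta R$ and counit $\epsilon$) on $\mathcal A_{\mathbb N}$. Under this correspondence $\xi=U_{\mathbb N}\mathrm{can}^{-1}$.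
   Context: $\mathcal A_{\mathbb N}$ is the Eilenberg–Moore category of $\mathbb N$-modules, $U_{\mathbb N}:\mathcal A_{\mathbb N}\to\mathcal A$ the forgetful functor. A lifting of $\mathbb C$ to $\mathcal A_{\mathbb N}$ is a comonad $\widetilde{\mathbb C}=(\widetilde C,\widetilde\Delta,\widetilde\varepsilon)$ on $\mathcal A_{\mathbb N}$ with $U_{\mathbb N}\widetilde C=CU_{\mathbb N}$, $U_{\mathbb N}\widetilde\Delta=\Delta^CU_{\mathbb N}$, $U_{\mathbb N}\widetilde\varepsilon=\varepsilon^CU_{\mathbb N}$. A left comodule functor for a comonad $\mathbb G=(G,\Delta,\varepsilon)$ is a functor $L$ with $l:L\to GL$ satisfying $(\varepsilon L)\circ l=L$, $(\Delta L)\circ l=(Gl)\circ l$; if $L$ has right adjoint $R$ with counit $\epsilon$, $\mathrm{can}:=(G\epsilon)\circ(lR):LR\to G$ is a comonad morphism, and $(L,l)$ is $\mathbb G$-Galois if $\mathrm{can}$ is an isomorphism. A comonad arrow from $\mathbb C$ (on $\mathcal A$) to $\mathbb C'=(C',\Delta',\varepsilon')$ (on $\mathcal A'$) is $(F:\mathcal A'\to\mathcal A,\xi:CF\to FC')$ with $(F\varepsilon')\circ\xi=\varepsilon F$ and $(F\Delta')\circ\xi=(\xi C')\circ(C\xi)\circ(\Delta F)$. ($\circ$ vertical, juxtaposition horizontal composition; a functor's name denotes its identity transformation.) *)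

From Stdlib Require Import ProofIrrelevance.

Set Implicit Arguments.
Unset Strict Implicit.

Record Category := {
  Ob :> Type;
  Hom : Ob -> Ob -> Type;
  cid : forall a, Hom a a;
  comp : forall x y z, Hom y z -> Hom x y -> Hom x z;
  comp_id_l : forall a b (f : Hom a b), comp (cid b) f = f;
  comp_id_r : forall a b (f : Hom a b), comp f (cid a) = f;
  comp_assoc : forall a b c d (f : Hom c d) (g : Hom b c) (h : Hom a b),
      comp f (comp g h) = comp (comp f g) h }.
Arguments Hom {_} _ _.
Arguments cid {_} _.
Arguments comp {_ _ _ _} _ _.

Notation "g ∘ f" := (comp g f) (at level 40, left associativity).

Record Functor (A B : Category) := {
  fobj :> A -> B;
  fmap : forall a b, Hom a b -> Hom (fobj a) (fobj b);
  fmap_id : forall a, fmap (cid a) = cid (fobj a);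
  fmap_comp : forall a b c (g : Hom b c) (f : Hom a b),
      fmap (g ∘ f) = fmap g ∘ fmap f }.
Arguments fmap {A B} _ {a b} _.

Definition IdF (A : Category) : Functor A A.
Proof.
  refine {| fobj := fun a => a; fmap := fun a b f => f |}; reflexivity.
Defined.

Definition CompF (A B C : Category) (G : Functor B C) (F : Functor A B) : Functor A C.
Proof.
  refine {| fobj := fun a => G (F a); fmap := fun a b f => fmap G (fmap F f) |}.
  - intros a; rewrite !fmap_id; reflexivity.
  - intros a b c g f; rewrite !fmap_comp; reflexivity.
Defined.

Record NatTrans (A B : Category) (F G : Functor A B) := {
  comp_at :> forall a, Hom (F a) (G a);
  natural : forall a b (f : Hom a b), fmap G f ∘ comp_at a = comp_at b ∘ fmap F f }.

Record Monad (A : Category) := {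
  mT : Functor A A;
  mmu : NatTrans (CompF mT mT) mT;
  meta : NatTrans (IdF A) mT;
  mon_assoc : forall a, mmu a ∘ fmap mT (mmu a) = mmu a ∘ mmu (mT a);
  mon_unit_l : forall a, mmu a ∘ meta (mT a) = cid (mT a);
  mon_unit_r : forall a, mmu a ∘ fmap mT (meta a) = cid (mT a) }.

Record Comonad (A : Category) := {
  cT : Functor A A;
  cdelta : NatTrans cT (CompF cT cT);
  ceps : NatTrans cT (IdF A);
  com_coassoc : forall a, fmap cT (cdelta a) ∘ cdelta a = cdelta (cT a) ∘ cdelta a;
  com_counit_l : forall a, ceps (cT a) ∘ cdelta a = cid (cT a);
  com_counit_r : forall a, fmap cT (ceps a) ∘ cdelta a = cid (cT a) }.

Section EM.
Variables (A : Category) (N : Monad A).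

Record EMObj := {
  car : Ob A;
  act : Hom (mT N car) car;
  act_unit : act ∘ meta N car = cid car;
  act_assoc : act ∘ fmap (mT N) act = act ∘ mmu N car }.

Record EMHom (X Y : EMObj) := {
  hom_of : Hom (car X) (car Y);
  hom_prop : hom_of ∘ act X = act Y ∘ fmap (mT N) hom_of }.

Lemma EMHom_eq (X Y : EMObj) (f g : EMHom X Y) : hom_of f = hom_of g -> f = g.
Proof.
  destruct f as [f pf], g as [g pg]; simpl; intros e; subst g.
  f_equal; apply proof_irrelevance.
Qed.

Definition EMid (X : EMObj) : EMHom X X.
Proof.
  refine {| hom_of := cid (car X) |}.
  rewrite fmap_id, comp_id_l, comp_id_r; reflexivity.
Defined.

Definition EMcomp (X Y Z : EMObj) (g : EMHom Y Z) (f : EMHom X Y) : EMHom X Z.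
Proof.
  refine {| hom_of := hom_of g ∘ hom_of f |}.
  rewrite fmap_comp, <- comp_assoc, hom_prop, comp_assoc, hom_prop, comp_assoc.
  reflexivity.
Defined.

Definition EM : Category.
Proof.
  refine {| Ob := EMObj; Hom := EMHom; cid := EMid; comp := EMcomp |}.
  - intros a b f; apply EMHom_eq; simpl; apply comp_id_l.
  - intros a b f; apply EMHom_eq; simpl; apply comp_id_r.
  - intros a b c d f g h; apply EMHom_eq; simpl; apply comp_assoc.
Defined.

Definition EMforget : Functor EM A.
Proof.
  refine (@Build_Functor EM A (fun X : EMObj => car X) (fun X Y (f : EMHom X Y) => hom_of f) _ _); reflexivity.
Defined.
End EM.
Arguments car {A N} _.
Arguments act {A N} _.
Arguments hom_of {A N X Y} _.

Record Adjunction (A B : Category) (L : Functor B A) (R : Functor A B) := {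
  adj_unit : NatTrans (IdF B) (CompF R L);
  adj_counit : NatTrans (CompF L R) (IdF A);
  adj_tri_l : forall b, adj_counit (L b) ∘ fmap L (adj_unit b) = cid (L b);
  adj_tri_r : forall a, fmap R (adj_counit a) ∘ adj_unit (R a) = cid (R a) }.

Definition castHom (A : Category) (a a' b b' : Ob A) (e1 : a = a') (e2 : b = b')
  (f : Hom a b) : Hom a' b' :=
  match e1 in _ = x, e2 in _ = y return Hom x y with eq_refl, eq_refl => f end.

(* A lifting of the comonad Cm to a comonad on the Eilenberg-Moore category:
   a comonad Ct on A_N with U Ct = C U, U Delta~ = Delta U, U eps~ = eps U
   (strict equalities, the morphism parts stated up to the transport along
   the object-level equality). *)
Record Lifting (A : Category) (N : Monad A) (Cm : Comonad A) := {
  lift : Comonad (EM N);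
  lift_obj : forall X : EMObj N, car (cT lift X) = cT Cm (car X);
  lift_map : forall (X Y : EMObj N) (f : EMHom X Y),
      castHom (lift_obj X) (lift_obj Y) (hom_of (fmap (cT lift) f))
      = fmap (cT Cm) (hom_of f);
  lift_delta : forall X : EMObj N,
      castHom (lift_obj X)
              (eq_trans (lift_obj (cT lift X)) (f_equal (fobj (cT Cm)) (lift_obj X)))
              (hom_of (cdelta lift X))
      = cdelta Cm (car X);
  lift_eps : forall X : EMObj N,
      castHom (lift_obj X) eq_refl (hom_of (ceps lift X)) = ceps Cm (car X) }.

Section Data.
Variables (A B : Category) (N : Monad A) (Cm : Comonad A)
          (L : Functor B (EM N)) (R : Functor (EM N) B) (adj : Adjunction L R).

Definition is_coaction (G : Comonad (EM N)) (l : NatTrans L (CompF (cT G) L)) : Prop :=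
  (forall b, ceps G (L b) ∘ l b = cid (L b)) /\
  (forall b, cdelta G (L b) ∘ l b = fmap (cT G) (l b) ∘ l b).

Definition can_at (G : Comonad (EM N)) (l : NatTrans L (CompF (cT G) L)) (X : EMObj N)
  : Hom (L (R X)) (cT G X) :=
  fmap (cT G) (adj_counit adj X) ∘ l (R X).

Definition is_Galois (G : Comonad (EM N)) (l : NatTrans L (CompF (cT G) L)) : Prop :=
  forall X : EMObj N, exists g : Hom (cT G X) (L (R X)),
    g ∘ can_at l X = cid (L (R X)) /\ can_at l X ∘ g = cid (cT G X).

Definition DataA : Type :=
  { Ct : Lifting N Cm &
    { l : NatTrans L (CompF (cT (lift Ct)) L) | is_coaction l /\ is_Galois l } }.

Definition is_comonad_arrow
  (xi : NatTrans (CompF (cT Cm) (EMforget N)) (CompF (EMforget N) (CompF L R))) : Prop :=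
  (forall X : EMObj N, hom_of (adj_counit adj X) ∘ xi X = ceps Cm (car X)) /\
  (forall X : EMObj N,
      hom_of (fmap L (adj_unit adj (R X))) ∘ xi X
      = xi (L (R X)) ∘ fmap (cT Cm) (xi X) ∘ cdelta Cm (car X)).

Definition is_natiso (A' B' : Category) (F G : Functor A' B') (t : NatTrans F G) : Prop :=
  forall a, exists g : Hom (G a) (F a), g ∘ t a = cid (F a) /\ t a ∘ g = cid (G a).

Definition DataB : Type :=
  { xi : NatTrans (CompF (cT Cm) (EMforget N)) (CompF (EMforget N) (CompF L R))
  | is_natiso xi /\ is_comonad_arrow xi }.

Definition Ucan (d : DataA) (X : EMObj N) : Hom (car (L (R X))) (cT Cm (car X)) :=
  castHom eq_refl (lift_obj (projT1 d) X) (hom_of (can_at (proj1_sig (projT2 d)) X)).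

End Data.

(* For any coaction [l], the canonical map [can : LR -> C~] is a morphism of comonads; its
   image [U can : U L R -> C U] is therefore a comonad arrow "in the opposite direction", and
   inverting it (which is possible exactly in the Galois case) gives the comonad arrow
   [xi = U can^-1]. Conversely, given [xi], the N-action of [L R X] transported along
   [chi = xi^-1] makes [C (U X)] an N-module; the comonad arrow identities say precisely that
   [C f], [Delta] and [eps] are then N-linear, which yields a lifting [C~] for which [chi] is an
   isomorphism [LR -> C~], and [l := chi L o L eta] is a Galois coaction with [can = chi].
   The two constructions are mutually inverse because a lifting is determined by its action
   on objects, and a coaction by its canonical map ([l = can L o L eta]). *)
From Stdlib Require Import ProofIrrelevance FunctionalExtensionality ClassicalEpsilon.

Set Implicit Arguments.
Unset Strict Implicit.

(* Composite functors only reduce to nested applications after [cbn]; [frewrite] rewrites with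
   an equation after normalising both it and the goal in this way. *)
Ltac simpl_functors := cbn [fobj fmap IdF CompF EMforget] in *.

Tactic Notation "frewrite" constr(t) :=
  let H := fresh in
  pose proof t as H; cbn [fobj fmap IdF CompF EMforget] in H |- *; rewrite H; clear H.
Tactic Notation "frewrite" "<-" constr(t) :=
  let H := fresh in
  pose proof t as H; cbn [fobj fmap IdF CompF EMforget] in H |- *; rewrite <- H; clear H.

Definition eqHom {C : Category} {a b : Ob C} (e : a = b) : Hom a b := castHom eq_refl e (cid a).

Lemma castHom_eqHom {C : Category} (a a' b b' : Ob C) (e1 : a = a') (e2 : b = b')
  (f : Hom a b) : castHom e1 e2 f = eqHom e2 ∘ f ∘ eqHom (eq_sym e1).
Proof. destruct e1, e2; simpl. rewrite comp_id_l, comp_id_r. reflexivity. Qed.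

Lemma castHom_inj {C : Category} (a a' b b' : Ob C) (e1 : a = a') (e2 : b = b')
  (f g : Hom a b) : castHom e1 e2 f = castHom e1 e2 g -> f = g.
Proof. destruct e1, e2; trivial. Qed.

Lemma eqHom_refl {C : Category} (a : Ob C) : eqHom (eq_refl a) = cid a.
Proof. reflexivity. Qed.

Lemma eqHom_sym_l {C : Category} (a b : Ob C) (e : a = b) : eqHom (eq_sym e) ∘ eqHom e = cid a.
Proof. destruct e; simpl. apply comp_id_l. Qed.

Lemma eqHom_sym_r {C : Category} (a b : Ob C) (e : a = b) : eqHom e ∘ eqHom (eq_sym e) = cid b.
Proof. destruct e; simpl. apply comp_id_l. Qed.

Lemma eqHom_trans {C : Category} (a b c : Ob C) (e1 : a = b) (e2 : b = c) :
  eqHom (eq_trans e1 e2) = eqHom e2 ∘ eqHom e1.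
Proof. destruct e1, e2; simpl. rewrite comp_id_l. reflexivity. Qed.

Lemma fmap_eqHom {C D : Category} (F : Functor C D) (a b : Ob C) (e : a = b) :
  fmap F (eqHom e) = eqHom (f_equal (fobj F) e).
Proof. destruct e; simpl. apply fmap_id. Qed.

Lemma left_inv_eq_right_inv {C : Category} (a b : Ob C) (f : Hom a b) (g h : Hom b a) :
  g ∘ f = cid a -> f ∘ h = cid b -> g = h.
Proof.
  intros Hg Hh. rewrite <- (comp_id_r g), <- Hh, comp_assoc, Hg, comp_id_l. reflexivity.
Qed.

Lemma square_transpose {C : Category} (a b c d : Ob C) (kX : Hom a b) (xX : Hom b a)
  (kY : Hom c d) (xY : Hom d c) (u : Hom a c) (v : Hom b d) :
  xY ∘ kY = cid c -> kX ∘ xX = cid b -> kY ∘ u = v ∘ kX -> u ∘ xX = xY ∘ v.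
Proof.
  intros HY HX Hsq. rewrite <- (comp_id_l u), <- HY, <- (comp_assoc xY kY u), Hsq.
  rewrite <- !comp_assoc, HX, comp_id_r. reflexivity.
Qed.

Lemma triangle_transpose {C : Category} (a b c : Ob C) (k : Hom a b) (x : Hom b a)
  (f : Hom b c) (g : Hom a c) : k ∘ x = cid b -> f ∘ k = g -> g ∘ x = f.
Proof. intros Hkx <-. rewrite <- comp_assoc, Hkx, comp_id_r. reflexivity. Qed.

Lemma NatTrans_ext (C D : Category) (F G : Functor C D) (s t : NatTrans F G) :
  (forall a, s a = t a) -> s = t.
Proof.
  destruct s as [s ps], t as [t pt]; simpl; intros H.
  assert (s = t) by (apply functional_extensionality_dep; exact H). subst t.
  f_equal; apply proof_irrelevance.
Qed.

Section Algebras.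
Variables (A : Category) (N : Monad A).

Lemma hom_of_comp (X Y Z : EM N) (g : Hom Y Z) (f : Hom X Y) :
  hom_of (g ∘ f) = hom_of g ∘ hom_of f.
Proof. reflexivity. Qed.

Lemma EMObj_ext (X Y : EMObj N) (e : car X = car Y) :
  act Y ∘ fmap (mT N) (eqHom e) = eqHom e ∘ act X -> X = Y.
Proof.
  destruct X as [x ax u1 a1], Y as [y ay u2 a2]; simpl in *. destruct e; simpl.
  rewrite fmap_id, comp_id_l, comp_id_r. intros ->. f_equal; apply proof_irrelevance.
Qed.

Lemma EMHom_prop_of_eq (X Y : EMObj N) (h : EMHom X Y) (f : Hom (car X) (car Y)) :
  f = hom_of h -> f ∘ act X = act Y ∘ fmap (mT N) f.
Proof. intros ->. apply hom_prop. Qed.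

Section Transport.
Variables (Y : EMObj N) (c : Ob A) (i : Hom (car Y) c) (j : Hom c (car Y)).
Hypotheses (ji : j ∘ i = cid (car Y)) (ij : i ∘ j = cid c).

Definition transport_act : Hom (mT N c) c := i ∘ act Y ∘ fmap (mT N) j.

Lemma transport_act_unit : transport_act ∘ meta N c = cid c.
Proof.
  unfold transport_act. rewrite <- !comp_assoc. frewrite (natural (meta N) j).
  rewrite (comp_assoc (act Y)). frewrite (act_unit Y). rewrite comp_id_l. exact ij.
Qed.

Lemma transport_act_assoc :
  transport_act ∘ fmap (mT N) transport_act = transport_act ∘ mmu N c.
Proof.
  unfold transport_act. rewrite !fmap_comp, <- !comp_assoc.
  rewrite (comp_assoc (fmap _ j) (fmap _ i)), <- fmap_comp, ji, fmap_id, comp_id_l.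
  rewrite (comp_assoc (act Y)), act_assoc. frewrite (natural (mmu N) j).
  rewrite !comp_assoc. reflexivity.
Qed.

Definition transport_alg : EMObj N :=
  {| car := c; act := transport_act;
     act_unit := transport_act_unit; act_assoc := transport_act_assoc |}.

Lemma transport_hom_prop : i ∘ act Y = act transport_alg ∘ fmap (mT N) i.
Proof.
  simpl. unfold transport_act.
  rewrite <- !comp_assoc, <- fmap_comp, ji, fmap_id, comp_id_r. reflexivity.
Qed.

Lemma transport_hom_inv_prop : j ∘ act transport_alg = act Y ∘ fmap (mT N) j.
Proof. simpl. unfold transport_act. rewrite !comp_assoc, ji, comp_id_l. reflexivity. Qed.

Definition transport_hom : @Hom (EM N) Y transport_alg :=
  @Build_EMHom A N Y transport_alg i transport_hom_prop.

Definition transport_hom_inv : @Hom (EM N) transport_alg Y :=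
  @Build_EMHom A N transport_alg Y j transport_hom_inv_prop.

Lemma transport_alg_unique (Y' : EMObj N) (e : car Y' = c) (h : EMHom Y Y') :
  eqHom e ∘ hom_of h = i -> Y' = transport_alg.
Proof.
  intros Hh. apply (@EMObj_ext Y' transport_alg e).
  assert (Hh' : hom_of h = eqHom (eq_sym e) ∘ i).
  { rewrite <- Hh, comp_assoc, eqHom_sym_l, comp_id_l. reflexivity. }
  assert (Hid : hom_of h ∘ (j ∘ eqHom e) = cid (car Y')).
  { rewrite Hh', <- comp_assoc, (comp_assoc i), ij, comp_id_l. apply eqHom_sym_l. }
  transitivity (eqHom e ∘ act Y' ∘ fmap (mT N) (hom_of h ∘ (j ∘ eqHom e))).
  - rewrite !fmap_comp, !comp_assoc, <- (comp_assoc (eqHom e) (act Y')), <- hom_prop.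
    rewrite (comp_assoc (eqHom e) (hom_of h)), Hh. reflexivity.
  - rewrite Hid, fmap_id, comp_id_r. reflexivity.
Qed.
End Transport.
End Algebras.

Lemma Lifting_ext (A : Category) (N : Monad A) (Cm : Comonad A) (Ct1 Ct2 : Lifting N Cm) :
  (forall X, cT (lift Ct1) X = cT (lift Ct2) X) -> Ct1 = Ct2.
Proof.
  destruct Ct1 as [[[fo1 fm1 fi1 fc1] dl1 ep1 ca1 cl1 cr1] o1 m1 d1 e1],
           Ct2 as [[[fo2 fm2 fi2 fc2] dl2 ep2 ca2 cl2 cr2] o2 m2 d2 e2].
  cbn in *. intros Hobj.
  assert (fo1 = fo2) by (apply functional_extensionality; exact Hobj). subst fo2.
  assert (o1 = o2) by (apply functional_extensionality_dep; intros; apply proof_irrelevance).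
  subst o2.
  assert (fm1 = fm2).
  { do 3 (apply functional_extensionality_dep; intros).
    apply EMHom_eq. eapply castHom_inj. rewrite m1, m2. reflexivity. }
  subst fm2.
  assert (fi1 = fi2) by apply proof_irrelevance. subst fi2.
  assert (fc1 = fc2) by apply proof_irrelevance. subst fc2.
  assert (dl1 = dl2).
  { apply NatTrans_ext; intros X. apply EMHom_eq.
    eapply castHom_inj. rewrite d1, d2. reflexivity. }
  subst dl2.
  assert (ep1 = ep2).
  { apply NatTrans_ext; intros X. apply EMHom_eq.
    eapply castHom_inj. rewrite e1, e2. reflexivity. }
  subst ep2.
  assert (ca1 = ca2) by apply proof_irrelevance. subst ca2.
  assert (cl1 = cl2) by apply proof_irrelevance. subst cl2.
  assert (cr1 = cr2) by apply proof_irrelevance. subst cr2.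
  f_equal; apply proof_irrelevance.
Qed.

Section Correspondence.
Variables (A B : Category) (N : Monad A) (Cm : Comonad A)
          (L : Functor B (EM N)) (R : Functor (EM N) B) (adj : Adjunction L R).

Section CanonicalMap.
Variables (G : Comonad (EM N)) (l : NatTrans L (CompF (cT G) L)).

Lemma can_at_natural (X Y : EM N) (f : Hom X Y) :
  can_at adj l Y ∘ fmap L (fmap R f) = fmap (cT G) f ∘ can_at adj l X.
Proof.
  unfold can_at. simpl_functors. rewrite <- comp_assoc. frewrite <- (natural l).
  rewrite comp_assoc, <- fmap_comp. frewrite <- (natural (adj_counit adj) f).
  rewrite fmap_comp, comp_assoc. reflexivity.
Qed.

Lemma coaction_via_can (b : B) : l b = can_at adj l (L b) ∘ fmap L (adj_unit adj b).
Proof.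
  unfold can_at. simpl_functors. rewrite <- comp_assoc. frewrite <- (natural l).
  rewrite comp_assoc, <- fmap_comp. frewrite (adj_tri_l adj).
  rewrite fmap_id, comp_id_l. reflexivity.
Qed.

Hypothesis l_coaction : is_coaction l.

Lemma can_at_counit (X : EMObj N) : ceps G X ∘ can_at adj l X = adj_counit adj X.
Proof.
  unfold can_at. simpl_functors. rewrite comp_assoc. frewrite <- (natural (ceps G)).
  rewrite <- comp_assoc. frewrite (proj1 l_coaction). apply comp_id_r.
Qed.

Lemma can_at_comult (X : EMObj N) :
  cdelta G X ∘ can_at adj l X =
  fmap (cT G) (can_at adj l X) ∘ can_at adj l (L (R X)) ∘ fmap L (adj_unit adj (R X)).
Proof.
  rewrite <- comp_assoc, <- coaction_via_can. unfold can_at. simpl_functors.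
  rewrite fmap_comp, <- comp_assoc. frewrite <- (proj2 l_coaction).
  rewrite !comp_assoc. frewrite (natural (cdelta G)). reflexivity.
Qed.
End CanonicalMap.

(* [is_arrow_family xi] is "(U, xi) is a comonad arrow from C to LR" before packaging [xi] as
   a natural transformation; [is_coarrow_family] is the same notion for a family going the
   other way, which is what [U can] is. *)
Definition is_coarrow_family (k : forall X : EMObj N, Hom (car (L (R X))) (cT Cm (car X))) :=
  (forall (X Y : EM N) (f : Hom X Y),
      k Y ∘ hom_of (fmap L (fmap R f)) = fmap (cT Cm) (hom_of f) ∘ k X) /\
  (forall X, ceps Cm (car X) ∘ k X = hom_of (adj_counit adj X)) /\
  (forall X, cdelta Cm (car X) ∘ k X =
     fmap (cT Cm) (k X) ∘ k (L (R X)) ∘ hom_of (fmap L (adj_unit adj (R X)))).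

Definition is_arrow_family (xi : forall X : EMObj N, Hom (cT Cm (car X)) (car (L (R X)))) :=
  (forall (X Y : EM N) (f : Hom X Y),
      hom_of (fmap L (fmap R f)) ∘ xi X = xi Y ∘ fmap (cT Cm) (hom_of f)) /\
  (forall X, hom_of (adj_counit adj X) ∘ xi X = ceps Cm (car X)) /\
  (forall X, hom_of (fmap L (adj_unit adj (R X))) ∘ xi X =
     xi (L (R X)) ∘ fmap (cT Cm) (xi X) ∘ cdelta Cm (car X)).

Lemma coarrow_iff_arrow (k : forall X : EMObj N, Hom (car (L (R X))) (cT Cm (car X)))
  (xi : forall X : EMObj N, Hom (cT Cm (car X)) (car (L (R X)))) :
  (forall X, xi X ∘ k X = cid _) -> (forall X, k X ∘ xi X = cid _) ->
  is_coarrow_family k <-> is_arrow_family xi.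
Proof.
  intros xik kxi. split; intros [Hnat [Heps Hdelta]]; (split; [|split]); intros.
  - eapply square_transpose; [apply xik | apply kxi | apply Hnat].
  - eapply triangle_transpose; [apply kxi | apply Heps].
  - eapply square_transpose with (kY := fmap (cT Cm) (k X) ∘ k (L (R X))).
    + rewrite <- comp_assoc, (comp_assoc (fmap _ (xi X))), <- fmap_comp, xik, fmap_id,
        comp_id_l. apply xik.
    + apply kxi.
    + symmetry. apply Hdelta.
  - symmetry. eapply square_transpose; [apply kxi | apply xik | symmetry; apply Hnat].
  - eapply triangle_transpose; [apply xik | apply Heps].
  - eapply square_transpose with (kY := xi (L (R X)) ∘ fmap (cT Cm) (xi X)).
    + rewrite <- comp_assoc, (comp_assoc (k _)), kxi, comp_id_l, <- fmap_comp, kxi.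
      apply fmap_id.
    + apply xik.
    + symmetry. apply Hdelta.
Qed.

Section LiftedCanonicalMap.
Variables (Ct : Lifting N Cm) (l : NatTrans L (CompF (cT (lift Ct)) L)).
Hypothesis l_coaction : is_coaction l.

Definition lifted_can (X : EMObj N) : Hom (car (L (R X))) (cT Cm (car X)) :=
  eqHom (lift_obj Ct X) ∘ hom_of (can_at adj l X).

Lemma lift_map_eqHom (X Y : EMObj N) (f : EMHom X Y) :
  eqHom (lift_obj Ct Y) ∘ hom_of (fmap (cT (lift Ct)) f) =
  fmap (cT Cm) (hom_of f) ∘ eqHom (lift_obj Ct X).
Proof.
  rewrite <- (lift_map Ct f), castHom_eqHom, <- comp_assoc, eqHom_sym_l, comp_id_r.
  reflexivity.
Qed.

Lemma lifted_can_natural (X Y : EM N) (f : Hom X Y) :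
  lifted_can Y ∘ hom_of (fmap L (fmap R f)) = fmap (cT Cm) (hom_of f) ∘ lifted_can X.
Proof.
  unfold lifted_can. rewrite <- comp_assoc, <- hom_of_comp, can_at_natural, hom_of_comp.
  rewrite comp_assoc, lift_map_eqHom, comp_assoc. reflexivity.
Qed.

Lemma lifted_can_counit (X : EMObj N) :
  ceps Cm (car X) ∘ lifted_can X = hom_of (adj_counit adj X).
Proof.
  unfold lifted_can. rewrite <- (lift_eps Ct X), castHom_eqHom, eqHom_refl, comp_id_l.
  rewrite <- comp_assoc, (comp_assoc (eqHom (eq_sym _))), eqHom_sym_l, comp_id_l.
  rewrite <- hom_of_comp, can_at_counit by exact l_coaction. reflexivity.
Qed.

Lemma lifted_can_comult (X : EMObj N) :
  cdelta Cm (car X) ∘ lifted_can X =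
  fmap (cT Cm) (lifted_can X) ∘ lifted_can (L (R X)) ∘ hom_of (fmap L (adj_unit adj (R X))).
Proof.
  unfold lifted_can. rewrite <- (lift_delta Ct X), castHom_eqHom, eqHom_trans, <- fmap_eqHom.
  rewrite <- comp_assoc, (comp_assoc (eqHom (eq_sym _))), eqHom_sym_l, comp_id_l.
  rewrite <- !comp_assoc, <- hom_of_comp, can_at_comult by exact l_coaction. simpl_functors.
  rewrite !hom_of_comp, fmap_comp, !comp_assoc, <- (comp_assoc _ (eqHom _)), lift_map_eqHom.
  rewrite !comp_assoc. reflexivity.
Qed.

Lemma lifted_can_coarrow : is_coarrow_family lifted_can.
Proof.
  split; [|split].
  - exact lifted_can_natural.
  - exact lifted_can_counit.
  - exact lifted_can_comult.
Qed.
End LiftedCanonicalMap.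

Lemma Ucan_lifted_can (d : DataA Cm adj) :
  Ucan d = lifted_can (proj1_sig (projT2 d)).
Proof.
  apply functional_extensionality_dep; intros X.
  unfold Ucan, lifted_can. rewrite castHom_eqHom. apply comp_id_r.
Qed.

Lemma Ucan_coarrow (d : DataA Cm adj) : is_coarrow_family (Ucan d).
Proof.
  rewrite Ucan_lifted_can. destruct d as [Ct [l [l_coaction l_Galois]]].
  exact (lifted_can_coarrow l_coaction).
Qed.

Definition can_inv (d : DataA Cm adj) (X : EMObj N) : Hom (cT (lift (projT1 d)) X) (L (R X)) :=
  proj1_sig (constructive_indefinite_description _ (proj2 (proj2_sig (projT2 d)) X)).

Lemma can_inv_spec (d : DataA Cm adj) (X : EMObj N) :
  can_inv d X ∘ can_at adj (proj1_sig (projT2 d)) X = cid _ /\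
  can_at adj (proj1_sig (projT2 d)) X ∘ can_inv d X = cid _.
Proof. unfold can_inv. destruct constructive_indefinite_description as [g Hg]. exact Hg. Qed.

Definition Ucan_inv (d : DataA Cm adj) (X : EMObj N) : Hom (cT Cm (car X)) (car (L (R X))) :=
  hom_of (can_inv d X) ∘ eqHom (eq_sym (lift_obj (projT1 d) X)).

Lemma Ucan_inv_l (d : DataA Cm adj) (X : EMObj N) : Ucan_inv d X ∘ Ucan d X = cid _.
Proof.
  rewrite Ucan_lifted_can. unfold Ucan_inv, lifted_can.
  rewrite comp_assoc, <- (comp_assoc _ _ (eqHom _)), eqHom_sym_l, comp_id_r, <- hom_of_comp.
  rewrite (proj1 (can_inv_spec d X)). reflexivity.
Qed.

Lemma Ucan_inv_r (d : DataA Cm adj) (X : EMObj N) : Ucan d X ∘ Ucan_inv d X = cid _.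
Proof.
  rewrite Ucan_lifted_can. unfold Ucan_inv, lifted_can.
  rewrite comp_assoc, <- (comp_assoc _ _ (hom_of (can_inv d X))), <- hom_of_comp.
  rewrite (proj2 (can_inv_spec d X)), comp_id_r. apply eqHom_sym_r.
Qed.

Lemma Ucan_inv_arrow (d : DataA Cm adj) : is_arrow_family (Ucan_inv d).
Proof. apply (coarrow_iff_arrow (Ucan_inv_l d) (Ucan_inv_r d)), Ucan_coarrow. Qed.

Definition Ucan_inv_nat (d : DataA Cm adj) :
  NatTrans (CompF (cT Cm) (EMforget N)) (CompF (EMforget N) (CompF L R)).
Proof.
  refine (@Build_NatTrans (EM N) A (CompF (cT Cm) (EMforget N)) (CompF (EMforget N) (CompF L R))
            (fun X : EM N => Ucan_inv d X) _).
  abstract (intros X Y f; exact (proj1 (Ucan_inv_arrow d) X Y f)).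
Defined.

Lemma Ucan_inv_nat_spec (d : DataA Cm adj) :
  is_natiso (Ucan_inv_nat d) /\ is_comonad_arrow adj (Ucan_inv_nat d).
Proof.
  split.
  - intros X. exists (Ucan d X). exact (conj (Ucan_inv_r d X) (Ucan_inv_l d X)).
  - exact (proj2 (Ucan_inv_arrow d)).
Qed.

Definition Phi (d : DataA Cm adj) : DataB Cm adj := exist _ (Ucan_inv_nat d) (Ucan_inv_nat_spec d).

Section FromArrow.
Variable b : DataB Cm adj.

Definition xi_at (X : EMObj N) : Hom (cT Cm (car X)) (car (L (R X))) := proj1_sig b X.

Definition xi_inv (X : EMObj N) : Hom (car (L (R X))) (cT Cm (car X)) :=
  proj1_sig (constructive_indefinite_description _ (proj1 (proj2_sig b) X)).

Lemma xi_inv_spec (X : EMObj N) : xi_inv X ∘ xi_at X = cid _ /\ xi_at X ∘ xi_inv X = cid _.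
Proof. unfold xi_inv. destruct constructive_indefinite_description as [g Hg]. exact Hg. Qed.

Lemma xi_inv_xi (X : EMObj N) : xi_inv X ∘ xi_at X = cid _.
Proof. apply xi_inv_spec. Qed.

Lemma xi_xi_inv (X : EMObj N) : xi_at X ∘ xi_inv X = cid _.
Proof. apply xi_inv_spec. Qed.

Lemma xi_at_arrow : is_arrow_family xi_at.
Proof.
  destruct (proj2_sig b) as [_ [Heps Hdelta]]. split; [|split].
  - intros X Y f. exact (natural (proj1_sig b) f).
  - exact Heps.
  - exact Hdelta.
Qed.

Lemma xi_inv_coarrow : is_coarrow_family xi_inv.
Proof. exact (proj2 (coarrow_iff_arrow xi_xi_inv xi_inv_xi) xi_at_arrow). Qed.

Definition lifted_obj (X : EMObj N) : EMObj N := transport_alg (xi_xi_inv X) (xi_inv_xi X).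

Definition xi_inv_hom (X : EMObj N) : @Hom (EM N) (L (R X)) (lifted_obj X) :=
  transport_hom (xi_xi_inv X) (xi_inv_xi X).

Definition xi_hom (X : EMObj N) : @Hom (EM N) (lifted_obj X) (L (R X)) :=
  transport_hom_inv (xi_xi_inv X) (xi_inv_xi X).

Ltac simpl_lifted := cbn [hom_of xi_inv_hom xi_hom transport_hom transport_hom_inv car lifted_obj transport_alg].

(* In each of the next three lemmas the carrier map, conjugated by [xi], is a composite of
   N-linear maps by one of the three comonad-arrow identities. *)
Lemma lifted_map_prop (X Y : EMObj N) (f : EMHom X Y) :
  fmap (cT Cm) (hom_of f) ∘ act (lifted_obj X) =
  act (lifted_obj Y) ∘ fmap (mT N) (fmap (cT Cm) (hom_of f)).
Proof.
  apply (EMHom_prop_of_eq (h := xi_inv_hom Y ∘ fmap L (fmap R (f : @Hom (EM N) X Y)) ∘ xi_hom X)).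
  destruct xi_inv_coarrow as [xi_inv_natural _].
  rewrite !hom_of_comp. simpl_lifted.
  rewrite xi_inv_natural, <- comp_assoc, xi_inv_xi, comp_id_r. reflexivity.
Qed.

Lemma lifted_delta_prop (X : EMObj N) :
  cdelta Cm (car X) ∘ act (lifted_obj X) =
  act (lifted_obj (lifted_obj X)) ∘ fmap (mT N) (cdelta Cm (car X)).
Proof.
  apply (EMHom_prop_of_eq (h := xi_inv_hom (lifted_obj X) ∘ fmap L (fmap R (xi_inv_hom X))
                            ∘ fmap L (adj_unit adj (R X)) ∘ xi_hom X)).
  destruct xi_inv_coarrow as [xi_inv_natural [_ xi_inv_comult]].
  rewrite !hom_of_comp, xi_inv_natural. simpl_lifted.
  rewrite <- xi_inv_comult, <- comp_assoc, xi_inv_xi, comp_id_r. reflexivity.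
Qed.

Lemma lifted_eps_prop (X : EMObj N) :
  ceps Cm (car X) ∘ act (lifted_obj X) = act X ∘ fmap (mT N) (ceps Cm (car X)).
Proof.
  apply (EMHom_prop_of_eq (h := adj_counit adj X ∘ xi_hom X)).
  destruct xi_inv_coarrow as [_ [xi_inv_counit _]].
  rewrite hom_of_comp. simpl_lifted.
  rewrite <- xi_inv_counit, <- comp_assoc, xi_inv_xi, comp_id_r. reflexivity.
Qed.

Definition lifted_map (X Y : EM N) (f : Hom X Y) : @Hom (EM N) (lifted_obj X) (lifted_obj Y) :=
  @Build_EMHom A N (lifted_obj X) (lifted_obj Y) (fmap (cT Cm) (hom_of f)) (lifted_map_prop f).

Definition lifted_functor : Functor (EM N) (EM N).
Proof.
  refine (@Build_Functor (EM N) (EM N) lifted_obj lifted_map _ _).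
  - abstract (intros X; apply EMHom_eq; apply fmap_id).
  - abstract (intros X Y Z g f; apply EMHom_eq; apply fmap_comp).
Defined.

Definition lifted_delta (X : EM N) : @Hom (EM N) (lifted_obj X) (lifted_obj (lifted_obj X)) :=
  @Build_EMHom A N (lifted_obj X) (lifted_obj (lifted_obj X)) (cdelta Cm (car X))
    (lifted_delta_prop X).

Definition lifted_eps (X : EM N) : @Hom (EM N) (lifted_obj X) X :=
  @Build_EMHom A N (lifted_obj X) X (ceps Cm (car X)) (lifted_eps_prop X).

Definition lifted_delta_nat : NatTrans lifted_functor (CompF lifted_functor lifted_functor).
Proof.
  refine (@Build_NatTrans (EM N) (EM N) lifted_functor (CompF lifted_functor lifted_functor)
            lifted_delta _).
  abstract (intros X Y f; apply EMHom_eq; exact (natural (cdelta Cm) (hom_of f))).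
Defined.

Definition lifted_eps_nat : NatTrans lifted_functor (IdF (EM N)).
Proof.
  refine (@Build_NatTrans (EM N) (EM N) lifted_functor (IdF (EM N)) lifted_eps _).
  abstract (intros X Y f; apply EMHom_eq; exact (natural (ceps Cm) (hom_of f))).
Defined.

Definition lifted_comonad : Comonad (EM N).
Proof.
  refine (@Build_Comonad (EM N) lifted_functor lifted_delta_nat lifted_eps_nat _ _ _).
  - abstract (intros X; apply EMHom_eq; apply com_coassoc).
  - abstract (intros X; apply EMHom_eq; apply com_counit_l).
  - abstract (intros X; apply EMHom_eq; apply com_counit_r).
Defined.

Definition lifting_of : Lifting N Cm.
Proof.
  refine (@Build_Lifting A N Cm lifted_comonad (fun X => eq_refl) _ _ _); abstract reflexivity.
Defined.

Definition coaction_at (c : B) : @Hom (EM N) (L c) (lifted_obj (L c)) :=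
  xi_inv_hom (L c) ∘ fmap L (adj_unit adj c).

Lemma coaction_at_natural (a c : B) (f : Hom a c) :
  lifted_map (fmap L f) ∘ coaction_at a = coaction_at c ∘ fmap L f.
Proof.
  apply EMHom_eq. destruct xi_inv_coarrow as [xi_inv_natural _].
  unfold coaction_at. rewrite !hom_of_comp. simpl_lifted.
  rewrite <- comp_assoc, <- hom_of_comp, <- fmap_comp. frewrite <- (natural (adj_unit adj) f).
  rewrite fmap_comp, hom_of_comp, !comp_assoc, xi_inv_natural. reflexivity.
Qed.

Definition coaction_of : NatTrans L (CompF (cT lifted_comonad) L).
Proof.
  refine (@Build_NatTrans B (EM N) L (CompF (cT lifted_comonad) L) coaction_at _).
  abstract (exact coaction_at_natural).
Defined.

Lemma hom_of_coaction_at (c : B) :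
  hom_of (coaction_at c) = xi_inv (L c) ∘ hom_of (fmap L (adj_unit adj c)).
Proof. reflexivity. Qed.

Lemma coaction_of_coaction : is_coaction coaction_of.
Proof.
  destruct xi_inv_coarrow as [xi_inv_natural [xi_inv_counit xi_inv_comult]].
  split; intros c; apply EMHom_eq.
  - change (ceps Cm (car (L c)) ∘ hom_of (coaction_at c) = cid (car (L c))).
    rewrite hom_of_coaction_at, comp_assoc, xi_inv_counit. simpl_functors.
    rewrite <- hom_of_comp. frewrite (adj_tri_l adj). reflexivity.
  - change (cdelta Cm (car (L c)) ∘ hom_of (coaction_at c) =
            fmap (cT Cm) (hom_of (coaction_at c)) ∘ hom_of (coaction_at c)).
    rewrite !hom_of_coaction_at, comp_assoc, xi_inv_comult, fmap_comp.
    assert (Hunit : hom_of (fmap L (adj_unit adj (R (L c)))) ∘ hom_of (fmap L (adj_unit adj c)) =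
      hom_of (fmap L (fmap R (fmap L (adj_unit adj c)))) ∘ hom_of (fmap L (adj_unit adj c))).
    { rewrite <- !hom_of_comp, <- !fmap_comp. frewrite (natural (adj_unit adj) (adj_unit adj c)).
      reflexivity. }
    simpl_functors. rewrite <- !comp_assoc, Hunit, !comp_assoc.
    rewrite <- (comp_assoc _ (fmap (cT Cm) (hom_of _)) (xi_inv (L c))), <- xi_inv_natural.
    rewrite !comp_assoc. reflexivity.
Qed.

Lemma can_coaction_of (X : EMObj N) : can_at adj coaction_of X = xi_inv_hom X.
Proof.
  destruct xi_inv_coarrow as [xi_inv_natural _]. apply EMHom_eq.
  change (fmap (cT Cm) (hom_of (adj_counit adj X)) ∘ hom_of (coaction_at (R X)) = xi_inv X).
  rewrite hom_of_coaction_at, comp_assoc, <- xi_inv_natural, <- comp_assoc. simpl_functors.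
  rewrite <- hom_of_comp, <- fmap_comp. frewrite (adj_tri_r adj).
  rewrite fmap_id, comp_id_r. reflexivity.
Qed.

Lemma coaction_of_Galois : is_Galois adj coaction_of.
Proof.
  intros X. exists (xi_hom X). rewrite can_coaction_of.
  split; apply EMHom_eq; [apply xi_xi_inv | apply xi_inv_xi].
Qed.

Definition Psi : DataA Cm adj :=
  existT _ lifting_of (exist _ coaction_of (conj coaction_of_coaction coaction_of_Galois)).

Lemma Ucan_Psi (X : EMObj N) : Ucan Psi X = xi_inv X.
Proof.
  change (hom_of (can_at adj coaction_of X) = xi_inv X). rewrite can_coaction_of. reflexivity.
Qed.
End FromArrow.

Lemma DataA_eq_Psi (d : DataA Cm adj) (b : DataB Cm adj) :
  (forall X, Ucan d X = xi_inv b X) -> d = Psi b.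
Proof.
  destruct d as [Ct [l [l_coaction l_Galois]]]; intros HU.
  assert (Hcan : forall X, lifted_can l X = xi_inv b X).
  { intros X. rewrite <- HU, Ucan_lifted_can. reflexivity. }
  assert (Hobj : forall X, cT (lift Ct) X = lifted_obj b X).
  { intros X. exact (transport_alg_unique (xi_xi_inv b X) (xi_inv_xi b X) (Hcan X)). }
  assert (HCt : Ct = lifting_of b) by (apply Lifting_ext; exact Hobj).
  subst Ct.
  assert (Hl : l = coaction_of b).
  { apply NatTrans_ext; intros c. apply EMHom_eq.
    change (hom_of (l c) = hom_of (coaction_at b c)).
    rewrite (coaction_via_can l c), hom_of_coaction_at, <- (Hcan (L c)).
    unfold lifted_can. cbn [lift_obj lifting_of]. rewrite eqHom_refl, comp_id_l.
    apply hom_of_comp. }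
  subst l. unfold Psi. f_equal. apply subset_eq_compat. reflexivity.
Qed.

Lemma Psi_Phi (d : DataA Cm adj) : Psi (Phi d) = d.
Proof.
  symmetry. apply DataA_eq_Psi. intros X.
  apply (left_inv_eq_right_inv (f := Ucan_inv d X)); [apply Ucan_inv_r | exact (xi_xi_inv (Phi d) X)].
Qed.

Lemma Phi_Psi (b : DataB Cm adj) : Phi (Psi b) = b.
Proof.
  apply eq_sig_hprop; [intros; apply proof_irrelevance|].
  apply NatTrans_ext; intros X.
  apply (left_inv_eq_right_inv (f := xi_inv b X)).
  - change (Ucan_inv (Psi b) X ∘ xi_inv b X = cid _).
    rewrite <- Ucan_Psi. apply Ucan_inv_l.
  - apply xi_inv_xi.
Qed.
End Correspondence.

Unset Implicit Arguments.
Set Strict Implicit.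

Theorem mainTheorem9 (A B : Category) (N : Monad A) (Cm : Comonad A)
  (L : Functor B (EM N)) (R : Functor (EM N) B) (adj : Adjunction L R) :
  exists (Phi : DataA Cm adj -> DataB Cm adj) (Psi : DataB Cm adj -> DataA Cm adj),
    (forall a, Psi (Phi a) = a) /\ (forall b, Phi (Psi b) = b) /\
    (forall a (X : EMObj N),
        proj1_sig (Phi a) X ∘ Ucan a X = cid (car (L (R X))) /\
        Ucan a X ∘ proj1_sig (Phi a) X = cid (cT Cm (car X))).
Proof.
  exists (fun d => Phi d), (fun b => Psi b). split; [|split].
  - intros d. apply Psi_Phi.
  - intros b. apply Phi_Psi.
  - intros d X. exact (conj (Ucan_inv_l d X) (Ucan_inv_r d X)).
Qed.
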